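(* Let $n$ be a positive integer, $g=3n+1$, and let $G=\{\ell_1<\dots<\ell_g\}$ be a symmetric pure $(2n)$-sparse gapset of genus $g$ with multiplicity $m$. Then $G$ has depth $4$, its canonical partition is $G=G_0\cup G_1\cup G_2\cup G_3$ with $G_3=\{\ell_g\}$ and $G_2=\{\ell_{g-1}\}$, and moreover $\ell_{g-1}=2m+1$, $\ell_g=3m+1$, $\#G_1=n$, and $\alpha=g-1$, where $\alpha=\max\{i:\ell_{i+1}-\ell_i=2n\}$.
   Context: A gapset is a finite set $G\subset\mathbb{N}=\{1,2,\dots\}$ such that whenever $z\in G$ and $z=x+y$ with $x,y\in\mathbb{N}$, then $x\in G$ or $y\in G$; its genus is $g=\#G$. Multiplicity $m(G)=\min\{s\in\mathbb{N}:s\notin G\}$; conductor $c(G)=\min\{s\in\mathbb{N}: s+t\notin G\ \forall t\in\mathbb{N}_0\}$; Frobenius number $F(G)=c(G)-1=\ell_g$; depth $q=\lceil c(G)/m(G)\rceil$. The canonical partition is $G=G_0\cup\dots\cup G_{q-1}$ with $G_i=G\cap[im+1,(i+1)m-1]$ (so $G_0=[1,m-1]$). $G$ is symmetric if $F(G)=2g-1$. $G$ is pure $\kappa$-sparse if $\ell_{i+1}-\ell_i\le\kappa$ for all $i$ with equality for some $i$. *)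

(* A gapset G = {l_1 < ... < l_g} is represented by the
   strictly increasing list s = [:: l_1; ...; l_g] of its elements. *)
From mathcomp Require Import all_boot.
Set Implicit Arguments. Unset Strict Implicit. Unset Printing Implicit Defensive.

(* 1-indexed access: ell s i = l_i *)
Definition ell (s : seq nat) (i : nat) : nat := nth 0 s i.-1.

Definition is_gapset (s : seq nat) : Prop :=
  sorted ltn s /\ (forall z, z \in s -> 0 < z) /\
  (forall z x y, z \in s -> 0 < x -> 0 < y -> x + y = z -> (x \in s) || (y \in s)).

Definition genus (s : seq nat) : nat := size s.

Definition is_multiplicity (s : seq nat) (m : nat) : Prop :=
  0 < m /\ m \notin s /\ (forall k, 0 < k -> k < m -> k \in s).

Definition frobenius (s : seq nat) : nat := ell s (size s).
Definition conductor (s : seq nat) : nat := (frobenius s).+1.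

(* depth q = ceil(c / m) *)
Definition depth (s : seq nat) (m : nat) : nat := (conductor s + m - 1) %/ m.

Definition block (s : seq nat) (m i : nat) : seq nat :=
  [seq x <- s | (i * m < x) && (x < i.+1 * m)].

Definition symmetric_gapset (s : seq nat) : Prop := frobenius s = 2 * genus s - 1.

Definition pure_sparse (kappa : nat) (s : seq nat) : Prop :=
  (forall i, 1 <= i < size s -> ell s i.+1 - ell s i <= kappa) /\
  (exists2 i, 1 <= i < size s & ell s i.+1 - ell s i = kappa).

Definition alpha (kappa : nat) (s : seq nat) : nat :=
  \max_(1 <= i < size s | ell s i.+1 - ell s i == kappa) i.

(* Non-gaps are closed under addition, so m consecutive non-gaps (m the multiplicity) make
   every larger integer a non-gap; hence consecutive gaps differ by at most m.  In a symmetric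
   gapset y and F - y are never both gaps; as 1, ..., m - 1 and F - m are gaps, the penultimate
   gap is F - m and the last step is exactly m.  So a symmetric pure kappa-sparse gapset has
   kappa = m and alpha = g - 1.  For g = 3n + 1 and kappa = 2n this gives m = 2n and
   F = 6n + 1 = 3m + 1, whence G_0 = [1, m - 1], G_2 = {2m + 1}, G_3 = {3m + 1}, and G_1 holds the
   remaining n gaps. *)

From mathcomp Require Import all_boot zify.
Set Implicit Arguments. Unset Strict Implicit.

Lemma filter_ltn_cat (s : seq nat) t :
  sorted ltn s -> [seq x <- s | x < t] ++ [seq x <- s | t <= x] = s.
Proof.
elim: s => //= x s IH /[dup] /path_sorted s_sorted /(order_path_min ltn_trans) gt_x.
case: ltnP => [xt | tx] /=; first by rewrite IH.
rewrite (@eq_in_filter _ _ pred0) ?filter_pred0; last by move=> y /(allP gt_x) /=; lia.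
by congr (_ :: _); apply/all_filterP; apply: sub_all gt_x => y /=; lia.
Qed.

Lemma block_eq_singleton (s : seq nat) m i a : uniq s -> a \in s ->
  {in s, forall x, (i * m < x < i.+1 * m) = (x == a)} -> block s m i = [:: a].
Proof. by move=> s_uniq a_s blockE; rewrite /block (eq_in_filter blockE) filter_pred1_uniq. Qed.

Section SortedSeq.
Variable s : seq nat.
Hypothesis s_sorted : sorted ltn s.

Lemma leq_nth i j : i <= j -> j < size s -> nth 0 s i <= nth 0 s j.
Proof.
move=> ij js; have s_leq : sorted leq s by move: s_sorted; rewrite ltn_sorted_uniq_leq => /andP[].
by apply: (sorted_leq_nth leq_trans leqnn 0 s_leq) => //; rewrite inE; apply: leq_ltn_trans js.
Qed.

Lemma mem_ell i : 0 < i <= size s -> ell s i \in s.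
Proof. by case/andP=> i_pos i_le; rewrite /ell mem_nth // prednK. Qed.

Lemma frobenius_mem : 0 < size s -> frobenius s \in s.
Proof. by move=> s_gt0; apply: mem_ell; rewrite s_gt0 /=. Qed.

Lemma leq_frobenius x : x \in s -> x <= frobenius s.
Proof.
move=> xs; have xi : index x s < size s by rewrite index_mem.
by rewrite -(nth_index 0 xs) /frobenius /ell; apply: leq_nth; lia.
Qed.

Lemma leq_penultimate x : x \in s -> x < frobenius s -> x <= ell s (size s).-1.
Proof.
move=> xs; have xi : index x s < size s by rewrite index_mem.
rewrite -(nth_index 0 xs) /frobenius /ell; case: (ltnP (index x s) (size s).-1) => [lt_xi | le_xi].
  by move=> _; apply: leq_nth; lia.
have -> : index x s = (size s).-1 by lia.
by rewrite ltnn.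
Qed.

Lemma notin_between i x : 0 < i < size s -> ell s i < x < ell s i.+1 -> x \notin s.
Proof.
move=> i_range /andP[lo hi]; apply/negP => xs.
have xi : index x s < size s by rewrite index_mem.
rewrite /ell /= -(nth_index 0 xs) in lo hi.
case: (ltnP (index x s) i) => [lt_xi | le_ix].
  have : nth 0 s (index x s) <= nth 0 s i.-1 by apply: leq_nth; lia.
  by rewrite leqNgt lo.
by have := leq_nth le_ix xi; rewrite leqNgt hi.
Qed.

Lemma penultimate_lt_frobenius : 1 < size s -> ell s (size s).-1 < frobenius s.
Proof.
move=> g_gt1; rewrite /frobenius /ell.
by apply: (sorted_ltn_nth ltn_trans 0 s_sorted); rewrite ?inE; lia.
Qed.

End SortedSeq.

Section Gapset.
Variable s : seq nat.
Hypothesis s_gapset : is_gapset s.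
Let s_sorted : sorted ltn s := proj1 s_gapset.
Let s_pos : forall x, x \in s -> 0 < x := proj1 (proj2 s_gapset).
Let s_split := proj2 (proj2 s_gapset).
Let s_uniq : uniq s := sorted_uniq ltn_trans ltnn s_sorted.

Lemma nongap_addn a b : 0 < a -> 0 < b -> a \notin s -> b \notin s -> a + b \notin s.
Proof.
move=> a_pos b_pos /negbTE a_ng /negbTE b_ng; apply/negP => ab_s.
by have := s_split ab_s a_pos b_pos erefl; rewrite a_ng b_ng.
Qed.

Lemma nongap_muln k a : 0 < a -> a \notin s -> k * a \notin s.
Proof.
move=> a_pos a_ng; elim: k => [|[|k] IH]; first by apply/negP => /s_pos.
  by rewrite mul1n.
by rewrite mulSn addnC; apply: nongap_addn => //; rewrite muln_gt0.
Qed.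

(* Write y = (x + r) + q k with r < k. *)
Lemma nongap_from k x : 0 < k -> k \notin s -> 0 < x ->
  (forall j, j < k -> x + j \notin s) -> forall y, x <= y -> y \notin s.
Proof.
move=> k_pos k_ng x_pos run y xy.
have -> : y = (x + (y - x) %% k) + (y - x) %/ k * k by lia.
case: (posnP ((y - x) %/ k)) => [-> | q_pos]; first by rewrite addn0 run // ltn_mod.
by apply: nongap_addn; rewrite ?nongap_muln ?run ?ltn_mod ?muln_gt0 ?q_pos //; lia.
Qed.

Lemma gap_subn x a : x \in s -> 0 < a < x -> a \notin s -> x - a \in s.
Proof.
move=> x_s /andP[a_pos ax] /negbTE a_ng.
by have := s_split x_s a_pos (_ : 0 < x - a) (subnKC (ltnW ax)); rewrite a_ng /=; apply; lia.
Qed.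

(* Each k in [0, F] has k or F - k among the gaps, since F = k + (F - k) is a gap; both
   predicates hold for exactly g of the 2g values of k, so they never hold together. *)
Lemma symmetric_notin_compl x : symmetric_gapset s -> x \in s -> frobenius s - x \notin s.
Proof.
rewrite /symmetric_gapset /genus => s_sym xs; set F := frobenius s; set r := iota 0 F.+1.
have s_gt0 : 0 < size s by case: (s) xs.
have F_s : F \in s := frobenius_mem s_gt0.
have le_F := leq_frobenius s_sorted.
have count_s : count (mem s) r = size s.
  rewrite -size_filter; apply/perm_size/uniq_perm; rewrite ?filter_uniq ?iota_uniq //.
  by move=> y; rewrite mem_filter mem_iota /=; case ys: (y \in s) => //=; have := le_F y ys; lia.
have r_rev : perm_eq (map (subn F) r) r.
  apply: uniq_perm; rewrite ?iota_uniq //.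
    by rewrite map_inj_in_uniq ?iota_uniq // => a b; rewrite !mem_iota; lia.
  move=> y; rewrite mem_iota; apply/mapP/idP => [[k _ ->] | yF]; first by lia.
  by exists (F - y); rewrite ?mem_iota; lia.
have count_compl : count (fun k => F - k \in s) r = size s.
  by rewrite -count_s -(permP r_rev) count_map.
have count_or : count (predU (mem s) (fun k => F - k \in s)) r = size r.
  rewrite -count_predT; apply: eq_in_count => k; rewrite mem_iota /= => kF.
  case: (posnP k) => [-> | k_pos]; first by rewrite subn0 F_s orbT.
  case: (posnP (F - k)) => [Fk | Fk_pos].
    by rewrite (_ : k = F) ?F_s //; lia.
  exact: s_split F_s k_pos Fk_pos (subnKC _).
have : count (predI (mem s) (fun k => F - k \in s)) r = 0.
  have := count_predUI (mem s) (fun k => F - k \in s) r.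
  by rewrite count_or count_s count_compl size_iota; lia.
move/eqP; rewrite -leqn0 leqNgt -has_count => /hasPn/(_ x).
by rewrite mem_iota /= xs /=; apply; have := le_F x xs; lia.
Qed.

Section Multiplicity.
Variable m : nat.
Hypothesis s_mult : is_multiplicity s m.
Let m_pos : 0 < m := proj1 s_mult.
Let m_nongap : m \notin s := proj1 (proj2 s_mult).
Let below_m := proj2 (proj2 s_mult).

Lemma leq_genus_below_multiplicity k : k < m -> k <= size s.
Proof.
move=> km; have : size (iota 1 k) <= size s.
  by apply: uniq_leq_size (iota_uniq _ _) _ => j; rewrite mem_iota => j_range; apply: below_m; lia.
by rewrite size_iota.
Qed.

Lemma ndvd_multiplicity x : x \in s -> ~~ (m %| x).
Proof.
move=> xs; apply/negP => /dvdnP[q x_eq].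
by have := nongap_muln q m_pos m_nongap; rewrite -x_eq xs.
Qed.

Lemma step_le_multiplicity i : 0 < i < size s -> ell s i.+1 - ell s i <= m.
Proof.
move=> i_range; rewrite leqNgt; apply/negP => big_step.
have run j : j < m -> ell s i + 1 + j \notin s.
  by move=> jm; apply: (notin_between s_sorted i_range); lia.
have next_s : ell s i.+1 \in s by apply: mem_ell; lia.
by move: next_s; apply/negP/(nongap_from m_pos m_nongap _ run); lia.
Qed.

Lemma block0_multiplicity : block s m 0 = iota 1 m.-1.
Proof.
apply: (@irr_sorted_eq _ ltn ltn_trans ltnn).
- apply: (@sorted_filter nat ltn ltn_trans); exact: s_sorted.
- exact: iota_ltn_sorted.
- move=> x; rewrite mem_filter mem_iota mul0n mul1n.
  case: (boolP (x \in s)) => [_ | x_ng]; first by rewrite andbT; lia.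
  by rewrite andbF; apply/esym/negP => x_range; case/negP: x_ng; apply: below_m; lia.
Qed.

Lemma filter_ltn_flatten_block k :
  [seq x <- s | x < k * m] = flatten [seq block s m i | i <- iota 0 k].
Proof.
elim: k => [|k IH]; first by rewrite /= -(filter_pred0 s); apply: eq_filter => x; rewrite mul0n.
rewrite -addn1 iotaD map_cat flatten_cat -IH /= cats0.
rewrite -(filter_ltn_cat (k * m) (sorted_filter ltn_trans _ s_sorted)).
rewrite -!filter_predI; congr (_ ++ _); apply: eq_in_filter => x xs /=.
  by rewrite mulnDl mul1n; lia.
have := ndvd_multiplicity xs; rewrite add0n mulSn.
by case: (eqVneq x (k * m)) => [-> | x_neq]; rewrite ?dvdn_mull //; lia.
Qed.

Lemma canonical_partition : s = flatten [seq block s m i | i <- iota 0 (depth s m)].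
Proof.
rewrite -filter_ltn_flatten_block; apply/esym/all_filterP/allP => x xs /=.
have := leq_frobenius s_sorted xs; rewrite /depth /conductor.
have := m_pos; lia.
Qed.

Section Symmetric.
Hypothesis s_sym : symmetric_gapset s.
Hypothesis genus_gt1 : 1 < size s.

Let F_s : frobenius s \in s := frobenius_mem (ltnW genus_gt1).

Lemma symmetric_multiplicity_lt_frobenius : m < frobenius s.
Proof.
rewrite ltn_neqAle; apply/andP; split; first by apply: contraNneq m_nongap => ->.
rewrite leqNgt; apply/negP => /leq_genus_below_multiplicity.
by move: s_sym; rewrite /symmetric_gapset /genus; lia.
Qed.

Lemma symmetric_penultimate : ell s (size s).-1 = frobenius s - m.
Proof.
have m_lt_F := symmetric_multiplicity_lt_frobenius.
have e_lt_F := penultimate_lt_frobenius s_sorted genus_gt1.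
have e_s : ell s (size s).-1 \in s by apply: mem_ell; lia.
apply/eqP; rewrite eqn_leq; apply/andP; split.
  rewrite leqNgt; apply/negP => lt_e.
  by move: (symmetric_notin_compl s_sym e_s); rewrite below_m //; lia.
apply: (leq_penultimate s_sorted); last by lia.
by apply: gap_subn; rewrite ?m_pos.
Qed.

Lemma symmetric_last_step : ell s (size s) - ell s (size s).-1 = m.
Proof.
by rewrite symmetric_penultimate subKn // ltnW // symmetric_multiplicity_lt_frobenius.
Qed.

Lemma pure_sparse_symmetric k : pure_sparse k s -> k = m.
Proof.
case=> le_k [i i_range step_i]; apply/eqP; rewrite eqn_leq.
rewrite -{1}step_i step_le_multiplicity //= -symmetric_last_step.
by have := le_k (size s).-1; rewrite prednK; [apply; lia | lia].
Qed.

Lemma alpha_symmetric k : pure_sparse k s -> alpha k s = size s - 1.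
Proof.
move=> s_sparse; have k_eq := pure_sparse_symmetric s_sparse.
apply/eqP; rewrite eqn_leq; apply/andP; split.
  by apply/bigmax_leqP_seq => i; rewrite mem_index_iota; lia.
apply: (@leq_bigmax_seq _ _ _ (fun i => i)); first by rewrite mem_index_iota; lia.
by rewrite subn1 prednK ?symmetric_last_step ?k_eq //; lia.
Qed.

End Symmetric.

End Multiplicity.

End Gapset.

Theorem mainTheorem9 (n : nat) (s : seq nat) (m : nat) :
  0 < n ->
  is_gapset s ->
  genus s = 3 * n + 1 ->
  symmetric_gapset s ->
  pure_sparse (2 * n) s ->
  is_multiplicity s m ->
  let g := genus s in
  depth s m = 4 /\
  s = block s m 0 ++ block s m 1 ++ block s m 2 ++ block s m 3 /\
  block s m 3 = [:: ell s g] /\ block s m 2 = [:: ell s g.-1] /\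
  ell s g.-1 = 2 * m + 1 /\ ell s g = 3 * m + 1 /\
  size (block s m 1) = n /\
  alpha (2 * n) s = g - 1.
Proof.
move=> n_pos s_gapset s_genus s_sym s_sparse s_mult g; rewrite /g /genus in s_genus *.
have genus_gt1 : 1 < size s by lia.
have m_eq : m = 2 * n := esym (pure_sparse_symmetric s_gapset s_mult s_sym genus_gt1 s_sparse).
have F_eq : ell s (size s) = 3 * m + 1.
  by move: s_sym; rewrite /symmetric_gapset /genus /frobenius; lia.
have e_eq : ell s (size s).-1 = 2 * m + 1.
  by rewrite (symmetric_penultimate s_gapset s_mult s_sym genus_gt1) /frobenius F_eq; lia.
have depth_eq : depth s m = 4.
  rewrite /depth /conductor /frobenius F_eq (_ : _ + m - 1 = 4 * m + 1); last by lia.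
  by rewrite divnMDl ?divn_small; lia.
have s_sorted := proj1 s_gapset.
have s_uniq : uniq s := sorted_uniq ltn_trans ltnn s_sorted.
have block3 : block s m 3 = [:: ell s (size s)].
  apply: block_eq_singleton => //; first by apply: frobenius_mem; lia.
  move=> x xs; have := leq_frobenius s_sorted xs; rewrite /frobenius F_eq; lia.
have block2 : block s m 2 = [:: ell s (size s).-1].
  apply: block_eq_singleton => //; first by apply: mem_ell; lia.
  move=> x xs; have := leq_penultimate s_sorted xs; rewrite /frobenius F_eq e_eq; lia.
have s_cat := canonical_partition s_gapset s_mult; rewrite depth_eq /= cats0 in s_cat.
have block1_size : size (block s m 1) = n.
  move: (congr1 size s_cat); rewrite !size_cat block3 block2.
  by rewrite (block0_multiplicity s_gapset s_mult) size_iota /=; lia.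
rewrite (alpha_symmetric s_gapset s_mult s_sym genus_gt1 s_sparse).
by rewrite depth_eq -s_cat block3 block2 e_eq F_eq block1_size.
Qed.
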